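(* Let $J$ be an orthogonal complex structure on $\mathbb R^{2n}$ ($n\ge2$), and let $\Lambda_J=\{a-iJa: a\in\mathbb R^{2n}\}\subset\mathbb C^{2n}$. Then the map $$S^{2n-1}\to S(\Lambda_J),\qquad a\mapsto \tfrac{1}{\sqrt2}(a-iJa),$$ is orientation preserving if and only if $J$ is compatible with the standard orientation of $\mathbb R^{2n}$.
   Context: $\mathbb C^{2n}=\mathbb R^{2n}\oplus i\mathbb R^{2n}$ carries the complex bilinear extension of the standard inner product. An orthogonal complex structure $J$ satisfies $J^2=-1$ and $\langle Ja,Jb\rangle=\langle a,b\rangle$; it is compatible with the orientation if there is a positively oriented basis of the form $e_1,Je_1,\dots,e_n,Je_n$. $\Lambda_J$ is a complex $n$-dimensional subspace of $\mathbb C^{2n}$ (complex structure given by multiplication by $i$, which corresponds to $J$ under $a\mapsto a-iJa$). $S^{2n-1}\subset\mathbb R^{2n}$ is the unit sphere with the standard boundary orientation; $S(\Lambda_J)$ is the unit sphere of $\Lambda_J$ oriented as the boundary of its unit ball, with $\Lambda_J$ carrying its complex orientation. *)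

From HB Require Import structures.
From mathcomp Require Import all_boot all_order all_algebra.
From mathcomp Require Import reals.
Set Implicit Arguments. Unset Strict Implicit. Unset Printing Implicit Defensive.
Import GRing.Theory Num.Theory.
Local Open Scope ring_scope.

(* Vectors of R^N are row vectors 'rV[R]_N; a linear map with matrix J acts
   by a |-> a *m J.  Frames (ordered families of vectors) are functions
   nat -> vector, of which only the first N entries are used. *)

Definition ip (R : realType) (N : nat) (a b : 'rV[R]_N) : R := (a *m b^T) ord0 ord0.

Definition orth_cplx_str (R : realType) (N : nat) (J : 'M[R]_N) : Prop :=
  J *m J = - 1%:M /\ forall a b : 'rV[R]_N, ip (a *m J) (b *m J) = ip a b.

Definition rframe (R : realType) (N : nat) (V : nat -> 'rV[R]_N) : 'M[R]_N :=
  \matrix_(i < N, j < N) V i ord0 j.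

Definition std_pos (R : realType) (N : nat) (V : nat -> 'rV[R]_N) : Prop :=
  0 < \det (rframe V).

Definition consf (T : Type) (x : T) (V : nat -> T) : nat -> T :=
  fun i => if i is j.+1 then V j else x.

Definition compatible_orient (R : realType) (N : nat) (J : 'M[R]_N) : Prop :=
  exists e : nat -> 'rV[R]_N,
    std_pos (fun i => if odd i then e i./2 *m J else e i./2).

(* C^N = R^N (+) i R^N : a vector z is the pair (Re z, Im z) *)
Definition cvec (R : realType) (N : nat) := ('rV[R]_N * 'rV[R]_N)%type.

Definition cemb (R : realType) (N : nat) (z : cvec R N) : 'rV[R]_(N + N) :=
  row_mx z.1 z.2.

(* real inner product on C^N = R^(2N) (real part of the Hermitian product) *)
Definition cip (R : realType) (N : nat) (z w : cvec R N) : R :=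
  ip z.1 w.1 + ip z.2 w.2.

Definition cmulI (R : realType) (N : nat) (z : cvec R N) : cvec R N :=
  (- z.2, z.1).

Definition LamJ (R : realType) (N : nat) (J : 'M[R]_N) (z : cvec R N) : Prop :=
  exists a : 'rV[R]_N, z = (a, - (a *m J)).

Definition cframe_mx (R : realType) (N : nat) (F : nat -> cvec R N)
  : 'M[R]_(N, N + N) := \matrix_(i < N, j < N + N) cemb (F i) ord0 j.

Definition LamJ_basis (R : realType) (N : nat) (J : 'M[R]_N) (F : nat -> cvec R N)
  : Prop :=
  [/\ forall i, (i < N)%N -> LamJ J (F i),
      row_free (cframe_mx F) &
      forall z, LamJ J z -> (cemb z <= cframe_mx F)%MS].

Definition realify (R : realType) (N : nat) (w : nat -> cvec R N) : nat -> cvec R N :=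
  fun i => if odd i then cmulI (w i./2) else w i./2.

(* (F 0, ..., F (N-1)) is a real basis of Lambda_J which is positively
   oriented for the complex orientation of Lambda_J: it differs by a
   positive-determinant change of basis from a basis w_1, i w_1, ..., w_n, i w_n
   obtained from a complex basis (w_k) of Lambda_J *)
Definition LamJ_pos (R : realType) (N : nat) (J : 'M[R]_N) (F : nat -> cvec R N)
  : Prop :=
  exists w : nat -> cvec R N,
    LamJ_basis J (realify w) /\
    exists M : 'M[R]_N,
      cframe_mx F = M *m cframe_mx (realify w) /\ 0 < \det M.

(* V 0, ..., V (N-2) is a positively oriented basis of T_p S^{N-1}
   (boundary orientation: outward normal p first) *)
Definition sph_pos (R : realType) (N : nat) (p : 'rV[R]_N) (V : nat -> 'rV[R]_N)
  : Prop :=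
  (forall k, (k < N.-1)%N -> ip p (V k) = 0) /\ std_pos (consf p V).

(* G 0, ..., G (N-2) is a positively oriented basis of T_q S(Lambda_J)
   (boundary orientation of the unit ball of Lambda_J: outward normal q first,
   Lambda_J with its complex orientation) *)
Definition LamJ_sph_pos (R : realType) (N : nat) (J : 'M[R]_N) (q : cvec R N)
  (G : nat -> cvec R N) : Prop :=
  (forall k, (k < N.-1)%N -> LamJ J (G k) /\ cip q (G k) = 0) /\
  LamJ_pos J (consf q G).

Definition phiJ (R : realType) (N : nat) (J : 'M[R]_N) (a : 'rV[R]_N) : cvec R N :=
  ((Num.sqrt 2)^-1 *: a, - ((Num.sqrt 2)^-1 *: (a *m J))).

(* phiJ : S^{N-1} -> S(Lambda_J) is orientation preserving: at every point p
   of the sphere, its differential (which is phiJ itself on T_p S^{N-1}, phiJ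
   being the restriction of a linear map) sends positively oriented bases of
   T_p S^{N-1} to positively oriented bases of T_{phiJ p} S(Lambda_J). *)
Definition phiJ_orient_pres (R : realType) (N : nat) (J : 'M[R]_N) : Prop :=
  forall p : 'rV[R]_N, ip p p = 1 ->
  forall V : nat -> 'rV[R]_N, sph_pos p V ->
    LamJ_sph_pos J (phiJ J p) (fun k => phiJ J (V k)).

From HB Require Import structures.
From mathcomp Require Import all_boot all_order all_algebra.
From mathcomp Require Import reals boolp.
Set Implicit Arguments. Unset Strict Implicit. Unset Printing Implicit Defensive.
Import GRing.Theory Num.Theory.
Local Open Scope ring_scope.

(* Up to the factor 1/sqrt 2, phiJ is the restriction of the real isometric
   isomorphism a |-> a - iJa from R^2n onto Lambda_J.  It sends the outward
   normal p and the tangent space at p to the outward normal and the tangent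
   space at phiJ p, so it preserves orientation iff this isomorphism carries
   the standard orientation of R^2n to the complex one of Lambda_J.  For any
   family e_1, ..., e_n, the complex family w_k = e_k - iJe_k has
   realification w_k, i w_k = Je_k - iJ(Je_k), the image of
   e_1, Je_1, ..., e_n, Je_n; hence the complex orientation pulls back to the
   orientation of such bases, which is the standard one iff J is
   compatible. *)

Lemma consf_map (T U : Type) (f : T -> U) x (V : nat -> T) :
  consf (f x) (fun k => f (V k)) = (fun i => f (consf x V i)).
Proof. by apply: funext => -[]. Qed.

Lemma consf_shift (T : Type) (f : nat -> T) : consf (f 0%N) (fun k => f k.+1) = f.
Proof. by apply: funext => -[]. Qed.

Section Frames.

Variables (R : realType) (N : nat).
Implicit Types (J : 'M[R]_N) (a b : 'rV[R]_N) (G : nat -> 'rV[R]_N).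

Definition lamJ J a : cvec R N := (a, - (a *m J)).

Definition Jframe J (e : nat -> 'rV[R]_N) : nat -> 'rV[R]_N :=
  fun i => if odd i then e i./2 *m J else e i./2.

Lemma ipZl (c : R) a b : ip (c *: a) b = c * ip a b.
Proof. by rewrite /ip -scalemxAl mxE. Qed.

Lemma ipZr (c : R) a b : ip a (c *: b) = c * ip a b.
Proof. by rewrite /ip linearZ /= -scalemxAr mxE. Qed.

Lemma ipNN a b : ip (- a) (- b) = ip a b.
Proof. by rewrite /ip linearN /= mulNmx mulmxN opprK. Qed.

Lemma LamJ_lamJ J a : LamJ J (lamJ J a).
Proof. by exists a. Qed.

Lemma eq_cframe_mx (F F' : nat -> cvec R N) :
  (forall i, (i < N)%N -> F i = F' i) -> cframe_mx F = cframe_mx F'.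
Proof. by move=> eqF; apply/matrixP => i j; rewrite !mxE eqF. Qed.

Lemma cframe_mx_lamJ J G :
  cframe_mx (fun i => lamJ J (G i)) = row_mx (rframe G) (- (rframe G *m J)).
Proof.
apply/matrixP => i j; rewrite mxE /cemb /=.
case: (splitP j) => k jk.
  by rewrite (_ : j = lshift _ k) ?row_mxEl ?mxE //; apply: val_inj.
rewrite (_ : j = rshift _ k) ?row_mxEr ?mxE; last exact: val_inj.
by congr (- _); apply: eq_bigr => l _; rewrite !mxE.
Qed.

Lemma rframeZ (c : R) G : rframe (fun i => c *: G i) = c *: rframe G.
Proof. by apply/matrixP => i j; rewrite !mxE. Qed.

Lemma LamJ_basis_lamJ J G :
  rframe G \in unitmx -> LamJ_basis J (fun i => lamJ J (G i)).
Proof.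
move=> Gu; rewrite /LamJ_basis cframe_mx_lamJ; split=> [i _||].
- exact: LamJ_lamJ.
- apply/row_freeP; exists (col_mx (invmx (rframe G)) 0).
  by rewrite mul_row_col mulmx0 addr0 mulmxV.
- move=> _ [a ->]; rewrite /cemb /=.
  have -> : row_mx a (- (a *m J)) =
            (a *m invmx (rframe G)) *m row_mx (rframe G) (- (rframe G *m J)).
    by rewrite mul_mx_row mulmxN mulmxA !mulmxKV.
  exact: submxMl.
Qed.

Section ComplexStructure.

Variable J : 'M[R]_N.
Hypothesis JJ : J *m J = - 1%:M.

Lemma cmulI_lamJ a : cmulI (lamJ J a) = lamJ J (a *m J).
Proof. by rewrite /cmulI /lamJ /= opprK -mulmxA JJ mulmxN mulmx1 opprK. Qed.

Lemma realify_lamJ (e : nat -> 'rV[R]_N) :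
  realify (fun k => lamJ J (e k)) = (fun i => lamJ J (Jframe J e i)).
Proof.
by apply: funext => i; rewrite /realify /Jframe; case: odd; rewrite ?cmulI_lamJ.
Qed.

Lemma realify_LamJ (w : nat -> cvec R N) i :
  LamJ J (realify w i) -> realify w i = lamJ J (Jframe J (fun k => (w k).1) i).
Proof.
rewrite /realify /Jframe; case: odd => -[a]; last by move->.
case: (w i./2) => x y /= [<- ->].
by rewrite /cmulI /lamJ /= !mulNmx !opprK -!mulmxA JJ !mulmxN !mulmx1 ?opprK.
Qed.

Lemma LamJ_pos_lamJ G : 0 < \det (rframe G) ->
  LamJ_pos J (fun i => lamJ J (G i)) <-> compatible_orient J.
Proof.
move=> G_gt0; split.
  case=> w [[wLam _ _] [M [GM M_gt0]]].
  exists (fun k => (w k).1); rewrite /std_pos -/(Jframe J _).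
  move: GM; rewrite (eq_cframe_mx (fun i iN => realify_LamJ (wLam i iN))).
  rewrite !cframe_mx_lamJ mul_mx_row => /eq_row_mx[/(congr1 determinant) GM _].
  by rewrite -(pmulr_rgt0 _ M_gt0) -det_mulmx -GM.
case=> e e_gt0.
have Eu : rframe (Jframe J e) \in unitmx by rewrite unitmxE unitfE lt0r_neq0.
exists (fun k => lamJ J (e k)); rewrite realify_lamJ; split.
  exact: LamJ_basis_lamJ.
exists (rframe G *m invmx (rframe (Jframe J e))); split.
  by rewrite !cframe_mx_lamJ mul_mx_row mulmxN mulmxA !mulmxKV.
by rewrite det_mulmx det_inv mulr_gt0 ?invr_gt0.
Qed.

End ComplexStructure.

Lemma phiJE J a : phiJ J a = lamJ J ((Num.sqrt 2)^-1 *: a).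
Proof. by rewrite /phiJ /lamJ scalemxAl. Qed.

Lemma cip_phiJ J a b : orth_cplx_str J -> cip (phiJ J a) (phiJ J b) = ip a b.
Proof.
case=> _ Jip; rewrite !phiJE /cip /lamJ /= ipNN Jip ipZl ipZr mulrA -expr2.
rewrite exprVn sqr_sqrtr ?ler0n // -mulr2n -mulrnAl -mulr_natr.
by rewrite mulVf ?mul1r ?pnatr_eq0.
Qed.

Lemma LamJ_sph_pos_phiJ J p V : orth_cplx_str J -> sph_pos p V ->
  LamJ_sph_pos J (phiJ J p) (fun k => phiJ J (V k)) <-> compatible_orient J.
Proof.
move=> hJ [V_tan V_pos].
have tangent k : (k < N.-1)%N ->
    LamJ J (phiJ J (V k)) /\ cip (phiJ J p) (phiJ J (V k)) = 0.
  by move=> kN; rewrite cip_phiJ // V_tan // phiJE; split=> //; apply: LamJ_lamJ.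
rewrite /LamJ_sph_pos.
have -> : consf (phiJ J p) (fun k => phiJ J (V k)) =
          (fun i => lamJ J ((Num.sqrt 2)^-1 *: consf p V i)).
  by rewrite consf_map; apply: funext => i; rewrite phiJE.
have c_gt0 : 0 < (Num.sqrt (2 : R))^-1 by rewrite invr_gt0 sqrtr_gt0 ltr0n.
have G_gt0 : 0 < \det (rframe (fun i => (Num.sqrt 2)^-1 *: consf p V i)).
  by rewrite rframeZ detZ mulr_gt0 ?exprn_gt0.
rewrite (LamJ_pos_lamJ hJ.1 G_gt0).
by split=> [[] | ] //; split.
Qed.

Definition basisv (i : nat) : 'rV[R]_N := \row_(j < N) (i == j)%:R.

Lemma ip_basisv_neq i k : i != k -> ip (basisv i) (basisv k) = 0.
Proof.
move=> ik; rewrite /ip mxE; apply: big1 => j _; rewrite !mxE.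
by case: eqP => [<-|_]; rewrite ?mul0r // eq_sym (negbTE ik) mulr0.
Qed.

Lemma ip_basisv i : (i < N)%N -> ip (basisv i) (basisv i) = 1.
Proof.
move=> iN; rewrite /ip mxE (bigD1 (Ordinal iN)) //= big1 => [|j].
  by rewrite !mxE eqxx mulr1 addr0.
by rewrite -val_eqE /= => /negbTE ji; rewrite !mxE eq_sym ji mul0r.
Qed.

Lemma sph_pos_basisv : (0 < N)%N ->
  ip (basisv 0) (basisv 0) = 1 /\ sph_pos (basisv 0) (fun k => basisv k.+1).
Proof.
move=> N_gt0; split; first exact: ip_basisv.
split=> [k _|]; first exact: ip_basisv_neq.
rewrite /std_pos (consf_shift basisv).
have -> : rframe basisv = 1%:M by apply/matrixP => i j; rewrite !mxE.
by rewrite det1 ltr01.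
Qed.

End Frames.

Theorem proposition5p1 (R : realType) (n : nat) (hn : (2 <= n)%N)
  (J : 'M[R]_(2 * n)) (hJ : orth_cplx_str J) :
  phiJ_orient_pres J <-> compatible_orient J.
Proof.
split=> [pres | compat p _ V V_pos]; last exact/(LamJ_sph_pos_phiJ hJ V_pos).
have N_gt0 : (0 < 2 * n)%N by rewrite muln_gt0 (leq_trans _ hn).
have [p_unit V_pos] := sph_pos_basisv R N_gt0.
exact/(LamJ_sph_pos_phiJ hJ V_pos)/(pres _ p_unit).
Qed.
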